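(* Let $\mathcal{G}=(\mathcal{P},\mathcal{L})$ be a Fischer space with finitely many points, let $R$ be a commutative ring with $2=0$, let $A=M_R(\mathcal{G},1)$ and let $s=\sum_{p\in\mathcal{P}}p\in A$. Then $\operatorname{Ann}(A)=Rs$.
   Context: A 3-transposition group is a pair $(G,D)$ where $D$ is a single conjugacy class of involutions generating $G$ with $de$ of order at most $3$ for all $d,e\in D$. Its Fischer space $\mathcal{G}=(\mathcal{P},\mathcal{L})$ has $\mathcal{P}=D$ and as lines the $3$-subsets consisting of the three involutions of a subgroup isomorphic to $\mathrm{Sym}(3)$; since $D$ is one conjugacy class, $\mathcal{G}$ is connected. Distinct points on a common line are collinear ($p\sim q$), and $p\wedge q$ is the third point of that line. The nilpotent Matsuo algebra $A=M_R(\mathcal{G},1)$ is the free $R$-module with basis $\mathcal{P}$ and commutative bilinear product $p\cdot q=0$ if $p=q$ or $p\not\sim q$, $p\cdot q=p+q+p\wedge q$ if $p\sim q$. $\operatorname{Ann}(A)=\{v\in A: vw=0 \text{ for all } w\in A\}$. *)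

From HB Require Import structures.
From mathcomp Require Import all_boot all_order all_fingroup all_algebra.
Set Implicit Arguments. Unset Strict Implicit. Unset Printing Implicit Defensive.
Import GRing.Theory.
Local Open Scope ring_scope.

(* A 3-transposition group (G, D) with G = <<D>>: D is a single conjugacy class
   of G consisting of involutions, and every product of two elements of D has
   order at most 3.  Since gT is a finGroupType, D is finite. *)
Definition three_transposition {gT : finGroupType} (D : {set gT}) : Prop :=
  [/\ exists2 d, d \in D & D = (d ^: <<D>>)%g,
      forall d, d \in D -> #[d]%g = 2%N &
      forall d e, d \in D -> e \in D -> (#[(d * e)%g]%g <= 3)%N].

Definition pts {gT : finGroupType} (D : {set gT}) := {x : gT | x \in D}.

(* Collinearity in the Fischer space: p <> q and <p,q> ~ Sym(3), i.e. pq has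
   order 3; the third point of the line is p /\ q = p ^ q = q p q. *)
Definition collinear {gT : finGroupType} (p q : gT) : bool :=
  (p != q) && (#[(p * q)%g]%g == 3%N).
Definition wedge {gT : finGroupType} (p q : gT) : gT := (p ^ q)%g.

(* The nilpotent Matsuo algebra M_R(G,1): free R-module on the points,
   elements are coefficient functions; the product is the bilinear extension
   of p.q = 0 if p = q or p, q not collinear, p.q = p + q + p/\q otherwise. *)
Definition matsuo_mul {gT : finGroupType} (D : {set gT}) (R : comPzRingType)
    (v w : {ffun pts D -> R}) : {ffun pts D -> R} :=
  [ffun r : pts D => \sum_(p : pts D) \sum_(q : pts D | collinear (val p) (val q))
      v p * w q * ((val r == val p)%:R + (val r == val q)%:R
                   + (val r == wedge (val p) (val q))%:R)].

Definition in_Ann {gT : finGroupType} (D : {set gT}) (R : comPzRingType)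
    (v : {ffun pts D -> R}) : Prop :=
  forall w, matsuo_mul v w = 0.

Definition sum_pts {gT : finGroupType} (D : {set gT}) (R : comPzRingType)
  : {ffun pts D -> R} := [ffun _ => 1].

From mathcomp Require Import all_boot all_order all_fingroup all_algebra.
From mathcomp Require Import cyclic.
Set Implicit Arguments. Unset Strict Implicit. Unset Printing Implicit Defensive.
Import GRing.Theory.
Local Open Scope ring_scope.

(* The coordinate at p of the product of v with a point q collinear with p is
   v(p) + v(p^q), while p^q = p when p, q are not collinear.  Hence an element
   of the annihilator is invariant under conjugation by the points, thus by
   G = <<D>>, and is constant because D is a single conjugacy class.
   Conversely, in s.w the contributions of p and p^q on each line through q
   coincide, so they cancel in characteristic 2. *)

Section Conjugation.
Variable gT : finGroupType.
Implicit Types a b g q r x y : gT.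

Lemma invg_involution q : #[q]%g = 2%N -> (q^-1 = q)%g.
Proof.
by move=> q2; apply/eqP; rewrite eq_invg_mul -expg2 -q2 expg_order.
Qed.

Lemma conjgK_involution q x : #[q]%g = 2%N -> ((x ^ q) ^ q = x)%g.
Proof. by move=> q2; rewrite -{2}(invg_involution q2) conjgK. Qed.

Lemma commute_involutionsP a q : #[a]%g = 2%N -> #[q]%g = 2%N ->
  reflect (commute a q) (#[(a * q)%g]%g %| 2)%N.
Proof.
move=> a2 q2; rewrite order_dvdn expg2 -eq_invg_mul invMg.
rewrite !invg_involution // eq_sym.
exact: eqP.
Qed.

Lemma conjg_fix_commute x y : (x ^ y)%g = x <-> commute x y.
Proof. by split=> [/conjg_fixP/commgP | /commgP/conjg_fixP]. Qed.

Lemma collinearJ a b g : collinear (a ^ g)%g (b ^ g)%g = collinear a b.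
Proof. by rewrite /collinear (inj_eq (conjg_inj g)) -conjMg orderJ. Qed.

Lemma collinear_conjgl a q : collinear (a ^ q)%g q = collinear a q.
Proof. by rewrite -{2}(mulKg q q) -conjgE collinearJ. Qed.

Lemma collinear_conjg_neq a q : #[a]%g = 2%N -> #[q]%g = 2%N ->
  collinear a q -> (a ^ q)%g != a.
Proof.
move=> a2 q2 /andP[_ /eqP aq3]; apply/negP => /eqP/conjg_fix_commute.
by move/(commute_involutionsP a2 q2); rewrite aq3.
Qed.

Lemma conjg_noncollinear r q : #[r]%g = 2%N -> #[q]%g = 2%N ->
  (#[(r * q)%g]%g <= 3)%N -> ~~ collinear r q -> (r ^ q)%g = r.
Proof.
move=> r2 q2 rq_le3; rewrite negb_and negbK => /orP[/eqP-> | rq_neq3].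
  by rewrite conjgE mulKg.
apply/conjg_fix_commute/(commute_involutionsP r2 q2).
by move: rq_neq3 rq_le3 (order_gt0 (r * q)%g); case: #[_]%g => [|[|[|[]]]].
Qed.

Lemma gen_conjg_invariant (T : eqType) (f : gT -> T) (A : {set gT}) :
  {in A, forall a x, f (x ^ a)%g = f x} ->
  {in <<A>>%g, forall g x, f (x ^ g)%g = f x}.
Proof.
move=> fA; pose S := [set g | [forall x, f (x ^ g)%g == f x]].
have groupS : group_set S.
  apply/group_setP; split=> [|g h]; rewrite !inE.
    by apply/forallP => x; rewrite conjg1.
  move=> /forallP fg /forallP fh; apply/forallP => x.
  by rewrite conjgM (eqP (fh _)) fg.
have sAS : (<<A>> \subset Group groupS)%g.
  rewrite gen_subG; apply/subsetP => a Aa.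
  by rewrite inE; apply/forallP => x; rewrite fA.
by move=> g /(subsetP sAS); rewrite inE => /forallP fg x; apply/eqP.
Qed.

End Conjugation.

Lemma sum_fpf_involution (V : nmodType) (I : finType) (P : pred I) (s : I -> I)
    (F : I -> V) :
  involutive s -> {in P, forall i, s i != i} -> (forall i, P (s i) = P i) ->
  (forall i, F (s i) = F i) ->
  \sum_(i | P i) F i
    = (\sum_(i | P i && (enum_rank i < enum_rank (s i))%N) F i) *+ 2.
Proof.
move=> sK s_fpf Ps Fs.
rewrite (bigID (fun i => enum_rank i < enum_rank (s i))%N).
rewrite /= mulr2n; congr (_ + _); rewrite (reindex_inj (inv_inj sK)) /=.
apply: eq_big => [i | i _]; last by rewrite Fs.
rewrite sK Ps; case Pi: (P i) => //=.
have rk_neq : (enum_rank i != enum_rank (s i) :> nat).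
  by rewrite (inj_eq val_inj) (inj_eq enum_rank_inj) eq_sym s_fpf.
by rewrite -leqNgt leq_eqVlt (negbTE rk_neq).
Qed.

Lemma sum_mul_delta (I : finType) (R : pzSemiRingType) (P : pred I)
    (F : I -> R) j :
  P j -> \sum_(i | P i) F i * (j == i)%:R = F j.
Proof.
move=> Pj; rewrite (bigD1 j) //= eqxx mulr1 big1 ?addr0 // => i /andP[_ ij].
by rewrite eq_sym (negbTE ij) mulr0.
Qed.

Definition line_coef {gT : finGroupType} (R : pzSemiRingType) (r p q : gT) : R :=
  (r == p)%:R + (r == q)%:R + (r == wedge p q)%:R.

Definition pt_vec {gT : finGroupType} {D : {set gT}} (R : comPzRingType)
    (q : pts D) : {ffun pts D -> R} :=
  [ffun x => (x == q)%:R].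

Lemma matsuo_mul_pt_vec (gT : finGroupType) (D : {set gT}) (R : comPzRingType)
    (v : {ffun pts D -> R}) (q r : pts D) :
  matsuo_mul v (pt_vec R q) r
    = \sum_(p | collinear (val p) (val q))
        v p * line_coef R (val r) (val p) (val q).
Proof.
rewrite ffunE [RHS]big_mkcond; apply: eq_bigr => p _.
rewrite big_mkcond (bigD1 q) //= big1 => [|q' /negbTE q'q]; last first.
  by rewrite ffunE q'q mulr0 mul0r if_same.
by rewrite ffunE eqxx mulr1 addr0.
Qed.

Section ThreeTranspositions.
Variables (gT : finGroupType) (D : {set gT}).
Hypothesis TT : three_transposition D.
Implicit Types p q r : pts D.

Lemma three_transposition_involution d : d \in D -> #[d]%g = 2%N.
Proof. by case: TT => _ D2 _; apply: D2. Qed.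

Lemma three_transposition_conjg_mem x y : x \in D -> y \in D -> (x ^ y)%g \in D.
Proof.
case: TT => -[d _ Dd] _ _; rewrite Dd => /imsetP[g Gg ->] yD.
by rewrite -conjgM memJ_class // groupM // mem_gen // Dd.
Qed.

Definition conj_pt q p : pts D :=
  exist _ (val p ^ val q)%g (three_transposition_conjg_mem (valP p) (valP q)).

Lemma conj_ptK q : involutive (conj_pt q).
Proof.
move=> p; apply: val_inj.
by rewrite /= conjgK_involution // three_transposition_involution ?(valP q).
Qed.

Lemma collinear_conj_pt q p :
  collinear (val (conj_pt q p)) (val q) = collinear (val p) (val q).
Proof. exact: collinear_conjgl. Qed.

Lemma conj_pt_neq q p : collinear (val p) (val q) -> conj_pt q p != p.
Proof.
move=> pq; rewrite -(inj_eq val_inj) collinear_conjg_neq //.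
  exact: three_transposition_involution (valP p).
exact: three_transposition_involution (valP q).
Qed.

Lemma conj_pt_noncollinear q p : ~~ collinear (val p) (val q) -> conj_pt q p = p.
Proof.
case: TT => _ D2 D3 npq; apply: val_inj; apply: conjg_noncollinear => //.
- exact: D2 (valP p).
- exact: D2 (valP q).
- exact: D3 (valP p) (valP q).
Qed.

Lemma conj_pt_invariant_eq (T : eqType) (f : pts D -> T) :
  (forall q p, f (conj_pt q p) = f p) -> forall p p', f p = f p'.
Proof.
(* f is extended by None off D, so that invariance makes sense in all of G. *)
move=> fJ; pose ext x : option T := omap f (insub x).
have extE p : ext (val p) = Some (f p) by rewrite /ext valK.
have extJ : {in D, forall y x, ext (x ^ y)%g = ext x}.
  move=> y yD x; have [xD | xND] := boolP (x \in D).
    have := extE (conj_pt (Sub y yD) (Sub x xD)).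
    by rewrite fJ /= => ->; rewrite -extE.
  rewrite /ext !insubN //; apply: contra xND => xyD.
  rewrite -(conjgK_involution x (three_transposition_involution yD)).
  exact: three_transposition_conjg_mem.
have [[d dD Dd] _ _] := TT.
have extD p : ext (val p) = ext d.
  have : val p \in (d ^: <<D>>)%g by rewrite -Dd (valP p).
  by case/imsetP=> g Gg ->; rewrite (gen_conjg_invariant extJ).
by move=> p p'; apply: Some_inj; rewrite -!extE !extD.
Qed.

Variable R : comPzRingType.
Hypothesis char2 : 2%:R = 0 :> R.

Lemma oppr_char2 (x : R) : - x = x.
Proof.
by apply/eqP; rewrite eq_sym -subr_eq0 opprK -mulr2n -mulr_natr char2 mulr0.
Qed.

Lemma sum_collinear_line_coef q r :
  \sum_(p : pts D | collinear (val p) (val q))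
    line_coef R (val r) (val p) (val q) = 0.
Proof.
rewrite (sum_fpf_involution (s := conj_pt q)).
- by rewrite -mulr_natr char2 mulr0.
- exact: conj_ptK.
- by move=> p; apply: conj_pt_neq.
- by move=> p; apply: collinear_conj_pt.
move=> p; rewrite /line_coef /wedge /= conjgK_involution; last first.
  exact: three_transposition_involution (valP q).
by rewrite addrAC [RHS]addrC addrA.
Qed.

Lemma matsuo_mul_pt_vec_collinear (v : {ffun pts D -> R}) q r :
  collinear (val r) (val q) ->
  matsuo_mul v (pt_vec R q) r = v r + v (conj_pt q r).
Proof.
move=> rq; have /andP[rq_neq _] := rq; rewrite matsuo_mul_pt_vec.
have rJ p : (val r == val p ^ val q)%g = (conj_pt q r == p).
  rewrite -(inj_eq val_inj) /= -(inj_eq (conjg_inj (val q))).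
  rewrite conjgK_involution //.
  exact: three_transposition_involution (valP q).
under eq_bigr => p _ do
  rewrite /line_coef /wedge (negbTE rq_neq) addr0 rJ (inj_eq val_inj) mulrDr.
by rewrite big_split /= !sum_mul_delta ?collinear_conj_pt.
Qed.

Lemma Ann_conj_pt_invariant (v : {ffun pts D -> R}) :
  in_Ann v -> forall q p, v (conj_pt q p) = v p.
Proof.
move=> Av q p; have [pq | npq] := boolP (collinear (val p) (val q)); last first.
  by rewrite conj_pt_noncollinear.
have := matsuo_mul_pt_vec_collinear v pq; rewrite Av ffunE => /esym/eqP.
by rewrite addr_eq0 => /eqP->; rewrite oppr_char2.
Qed.

Lemma scaled_sum_pts_Ann c : in_Ann [ffun p => c * sum_pts D R p].
Proof.
move=> w; apply/ffunP => r; rewrite !ffunE (exchange_big_dep xpredT) //=.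
apply: big1 => q _; under eq_bigr => p _ do rewrite !ffunE mulr1 -mulrA.
by rewrite -!mulr_sumr sum_collinear_line_coef !mulr0.
Qed.

End ThreeTranspositions.

Theorem lemma5p8 (gT : finGroupType) (D : {set gT}) (R : comPzRingType) :
  three_transposition D -> 2%:R = 0 :> R ->
  forall v : {ffun pts D -> R},
    in_Ann v <-> exists c : R, v = [ffun p => c * sum_pts D R p].
Proof.
move=> TT char2 v; split=> [Av | [c ->]]; last exact: scaled_sum_pts_Ann.
have [[d dD _] _ _] := TT.
exists (v (Sub d dD)); apply/ffunP => p; rewrite !ffunE mulr1.
exact: (conj_pt_invariant_eq (f := v) (Ann_conj_pt_invariant TT char2 Av)).
Qed.
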